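(* $\mathcal{T}$ is functional if and only if (1) for each relevant pair $\langle m_1,m_2\rangle$ of a state $p\in Q^2$, $\nu(p)$ is a most general equalizer (mge) for $\langle m_1,m_2\rangle$, and (2) for each final and accessible state $f\in F\times F$ of $\mathcal{A}^2$ we have $\nu(f)=\langle e,e\rangle$.
   Context: Let $\mathcal{M}=\langle M,\circ,e\rangle$ be a monoid. A tuple $\langle m_1,\dots,m_n\rangle\in M^n$ is equalizable if there is $\langle x_1,\dots,x_n\rangle\in M^n$ (an equalizer) with $m_1x_1=\dots=m_nx_n$; an equalizer $\langle x_1,\dots,x_n\rangle$ is a most general equalizer (mge) if every equalizer has the form $\langle x_1x,\dots,x_nx\rangle$ for some $x\in M$. $\mathcal{M}$ is an mge monoid if it has right cancellation ($ac=bc\Rightarrow a=b$) and every equalizable pair has an mge. Let $\eta:M^2\to M^2$ be a function that returns an mge $\eta(m,m')$ for each equalizable pair $\langle m,m'\rangle$. Let $\mathcal{T}=\langle \Sigma^*\times\mathcal{M},Q,I,F,\Delta\rangle$ be a trimmed (every state accessible and co-accessible) monoidal finite-state transducer with output in the mge monoid $\mathcal{M}$, where $\Delta\subseteq Q\times((\Sigma\cup\{\varepsilon\})\times M)\times Q$ and $\Delta^*$ is its generalized transition relation; $\mathcal{T}$ is functional if its accepted relation $L(\mathcal{T})\subseteq\Sigma^*\times M$ is a function. Let $\mathcal{A}^2=\langle \mathcal{M}\times\mathcal{M},Q\times Q,I\times I,F\times F,\Delta_2\rangle$ be a squared output automaton for $\mathcal{T}$, i.e. $\Delta_2$ is finite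 and $\langle\langle p_1,p_2\rangle,\langle m,n\rangle,\langle q_1,q_2\rangle\rangle\in\Delta_2^*$ iff there is $u\in\Sigma^*$ with $\langle p_1,\langle u,m\rangle,q_1\rangle\in\Delta^*$ and $\langle p_2,\langle u,n\rangle,q_2\rangle\in\Delta^*$. For a state $\langle q_1,q_2\rangle$ lying on a successful path of $\mathcal{A}^2$, a pair $\langle m_1,m_2\rangle$ is a relevant pair for $\langle q_1,q_2\rangle$ if $\langle\langle i_1,i_2\rangle,\langle m_1,m_2\rangle,\langle q_1,q_2\rangle\rangle\in\Delta_2^*$ for some $\langle i_1,i_2\rangle\in I\times I$. Let $\langle\rho,\nu\rangle$ be a valuation of $\mathcal{A}^2$: $\rho,\nu:Q^2\to M^2$ are partial functions where $\rho(q)$ is some chosen relevant pair for $q$ if one exists (undefined otherwise), with $\rho(q)=\langle e,e\rangle$ for $q\in I^2$ having a relevant pair; and $\nu(q)=\langle e,e\rangle$ if $\rho(q)$ is defined and of the form $\langle m,m\rangle$, $\nu(q)=\eta(\rho(q))$ if $\rho(q)$ is defined and equalizable, and $\nu(q)$ undefined otherwise. *)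

From mathcomp Require Import all_boot.
From Stdlib Require List.

Set Implicit Arguments.
Unset Strict Implicit.
Unset Printing Implicit Defensive.

Definition monoid_laws (M : Type) (op : M -> M -> M) (e : M) : Prop :=
  (forall a b c, op a (op b c) = op (op a b) c) /\
  (forall a, op e a = a) /\ (forall a, op a e = a).

Definition right_cancel (M : Type) (op : M -> M -> M) : Prop :=
  forall a b c, op a c = op b c -> a = b.

Definition is_equalizer (M : Type) (op : M -> M -> M) (m1 m2 : M) (x : M * M) : Prop :=
  op m1 x.1 = op m2 x.2.

Definition equalizable (M : Type) (op : M -> M -> M) (m1 m2 : M) : Prop :=
  exists x : M * M, is_equalizer op m1 m2 x.

Definition is_mge (M : Type) (op : M -> M -> M) (m1 m2 : M) (x : M * M) : Prop :=
  is_equalizer op m1 m2 x /\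
  forall y : M * M, is_equalizer op m1 m2 y ->
    exists z : M, y = (op x.1 z, op x.2 z).

Definition mge_monoid (M : Type) (op : M -> M -> M) (e : M) : Prop :=
  monoid_laws op e /\ right_cancel op /\
  forall m1 m2, equalizable op m1 m2 -> exists x, is_mge op m1 m2 x.

(* Generalized transition relation D^* of a monoidal automaton with transition
   labels in the monoid <N, opN, eN> and finite transition set D. *)
Inductive mstar (S N : Type) (opN : N -> N -> N) (eN : N) (D : list (S * N * S))
  : S -> N -> S -> Prop :=
| mstar_refl p : mstar opN eN D p eN p
| mstar_step p n q n' r :
    List.In (p, n, q) D -> mstar opN eN D q n' r -> mstar opN eN D p (opN n n') r.

Definition pair_op (A B : Type) (opA : A -> A -> A) (opB : B -> B -> B)
  (x y : A * B) : A * B := (opA x.1 y.1, opB x.2 y.2).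

(* input letter or epsilon, as a word *)
Definition word_of (Sigma : Type) (a : option Sigma) : seq Sigma :=
  if a is Some x then [:: x] else [::].

(* transitions of the transducer, labels seen in the monoid Sigma^* x M *)
Definition lift_delta (Sigma Q M : Type) (Delta : list (Q * (option Sigma * M) * Q))
  : list (Q * (seq Sigma * M) * Q) :=
  List.map (fun t => (t.1.1, (word_of t.1.2.1, t.1.2.2), t.2)) Delta.

Definition T_star (Sigma Q : finType) (M : Type) (op : M -> M -> M) (e : M)
  (Delta : list (Q * (option Sigma * M) * Q)) (p : Q) (l : seq Sigma * M) (q : Q) : Prop :=
  mstar (pair_op cat op) ([::], e) (lift_delta Delta) p l q.

Definition trimmed (Sigma Q : finType) (M : Type) (op : M -> M -> M) (e : M)
  (I F : {set Q}) (Delta : list (Q * (option Sigma * M) * Q)) : Prop :=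
  forall q : Q,
    (exists i l, i \in I /\ T_star op e Delta i l q) /\
    (exists f l, f \in F /\ T_star op e Delta q l f).

Definition accepted (Sigma Q : finType) (M : Type) (op : M -> M -> M) (e : M)
  (I F : {set Q}) (Delta : list (Q * (option Sigma * M) * Q)) (u : seq Sigma) (m : M) : Prop :=
  exists i f, [/\ i \in I, f \in F & T_star op e Delta i (u, m) f].

Definition functional (Sigma Q : finType) (M : Type) (op : M -> M -> M) (e : M)
  (I F : {set Q}) (Delta : list (Q * (option Sigma * M) * Q)) : Prop :=
  forall u m m', accepted op e I F Delta u m -> accepted op e I F Delta u m' -> m = m'.

Definition A2_star (Q : finType) (M : Type) (op : M -> M -> M) (e : M)
  (Delta2 : list ((Q * Q) * (M * M) * (Q * Q))) (p : Q * Q) (mn : M * M) (q : Q * Q) : Prop :=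
  mstar (pair_op op op) (e, e) Delta2 p mn q.

Definition squared_output_automaton (Sigma Q : finType) (M : Type) (op : M -> M -> M) (e : M)
  (Delta : list (Q * (option Sigma * M) * Q))
  (Delta2 : list ((Q * Q) * (M * M) * (Q * Q))) : Prop :=
  forall (p1 p2 q1 q2 : Q) (m n : M),
    A2_star op e Delta2 (p1, p2) (m, n) (q1, q2) <->
    exists u : seq Sigma, T_star op e Delta p1 (u, m) q1 /\ T_star op e Delta p2 (u, n) q2.

Definition A2_accessible (Q : finType) (M : Type) (op : M -> M -> M) (e : M)
  (I : {set Q}) (Delta2 : list ((Q * Q) * (M * M) * (Q * Q))) (q : Q * Q) : Prop :=
  exists i mn, [/\ i.1 \in I, i.2 \in I & A2_star op e Delta2 i mn q].

Definition A2_coaccessible (Q : finType) (M : Type) (op : M -> M -> M) (e : M)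
  (F : {set Q}) (Delta2 : list ((Q * Q) * (M * M) * (Q * Q))) (q : Q * Q) : Prop :=
  exists f mn, [/\ f.1 \in F, f.2 \in F & A2_star op e Delta2 q mn f].

Definition on_successful_path (Q : finType) (M : Type) (op : M -> M -> M) (e : M)
  (I F : {set Q}) (Delta2 : list ((Q * Q) * (M * M) * (Q * Q))) (q : Q * Q) : Prop :=
  A2_accessible op e I Delta2 q /\ A2_coaccessible op e F Delta2 q.

Definition relevant_pair (Q : finType) (M : Type) (op : M -> M -> M) (e : M)
  (I F : {set Q}) (Delta2 : list ((Q * Q) * (M * M) * (Q * Q)))
  (q : Q * Q) (mp : M * M) : Prop :=
  on_successful_path op e I F Delta2 q /\
  exists i : Q * Q, [/\ i.1 \in I, i.2 \in I & A2_star op e Delta2 i mp q].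

(* <rho, nu> is a valuation of A^2 (partial functions as option-valued) *)
Definition valuation (Q : finType) (M : Type) (op : M -> M -> M) (e : M)
  (I F : {set Q}) (Delta2 : list ((Q * Q) * (M * M) * (Q * Q)))
  (eta : M -> M -> M * M) (rho nu : Q * Q -> option (M * M)) : Prop :=
  (forall q, match rho q with
             | Some mp => relevant_pair op e I F Delta2 q mp
             | None => ~ (exists mp, relevant_pair op e I F Delta2 q mp)
             end) /\
  (forall q, q.1 \in I -> q.2 \in I ->
     (exists mp, relevant_pair op e I F Delta2 q mp) -> rho q = Some (e, e)) /\
  (forall q m, rho q = Some (m, m) -> nu q = Some (e, e)) /\
  (forall q m m', rho q = Some (m, m') -> m <> m' -> equalizable op m m' ->
     nu q = Some (eta m m')) /\
  (forall q m m', rho q = Some (m, m') -> ~ equalizable op m m' -> nu q = None) /\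
  (forall q, rho q = None -> nu q = None).

From mathcomp Require Import all_boot.
From Stdlib Require Import Classical.

Set Implicit Arguments.
Unset Strict Implicit.
Unset Printing Implicit Defensive.

(** Functionality of [T] says exactly that every successful path of [A^2]
    carries a diagonal label [<m, m>].  Given that, the mge of [rho p] is an
    mge of every relevant pair of [p]: all of them are equalized by the label
    of any path from [p] to a final state, and in an mge monoid two pairs with
    a common equalizer have the same mges.  Conversely, if [nu f] is both an
    mge of the label [<m, m'>] of a successful path ending in [f] and equal to
    [<e, e>], then [m = m']. *)

Section MgeMonoid.

Variables (M : Type) (op : M -> M -> M) (e : M).
Hypothesis HM : mge_monoid op e.

Lemma equalizer_cancel m1 m2 y1 y2 z :
  is_equalizer op m1 m2 (op y1 z, op y2 z) -> is_equalizer op m1 m2 (y1, y2).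
Proof. by case: HM => [[Hass _] [Hrc _]]; rewrite /is_equalizer /= !Hass => /Hrc. Qed.

Lemma is_mge_transfer n1 n2 m1 m2 y X :
  is_mge op n1 n2 X -> is_equalizer op n1 n2 y -> is_equalizer op m1 m2 y ->
  is_mge op m1 m2 X.
Proof.
case: HM => [[Hass _] [_ Hex]]; case: X => x1 x2 [_ HXg] Hn Hm.
have [z Hz] := HXg _ Hn.
have [[y1 y2] [_ HYg]] := Hex m1 m2 (ex_intro _ _ Hm).
have [z' Hz'] := HYg _ Hm.
have [w [Hw1 Hw2]] : exists w, (y1, y2) = (op x1 w, op x2 w).
  by apply: HXg; apply: (@equalizer_cancel _ _ _ _ z'); rewrite -Hz'.
split; first by apply: (@equalizer_cancel _ _ _ _ z); rewrite -Hz.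
by move=> y' /HYg [t ->]; exists (op w t); rewrite /= Hw1 Hw2 -!Hass.
Qed.

Lemma is_mge_diag n : is_mge op n n (e, e).
Proof.
case: HM => [[_ [Hl _]] [Hrc Hex]].
split=> [//|[y1 y2] Hy].
have [[x1 x2] [_ HXg]] := Hex n n (ex_intro _ (e, e) (erefl _)).
have [z [Hz1 Hz2]] := HXg (e, e) (erefl _).
have Hx : x1 = x2 by apply: (Hrc _ _ z); rewrite -Hz1 -Hz2.
have [t [-> ->]] := HXg _ Hy.
by exists (op x1 t); rewrite !Hl Hx.
Qed.

End MgeMonoid.

Lemma pair_op_monoid_laws (A B : Type) (opA : A -> A -> A) (opB : B -> B -> B) eA eB :
  monoid_laws opA eA -> monoid_laws opB eB -> monoid_laws (pair_op opA opB) (eA, eB).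
Proof.
move=> [HassA [HlA HrA]] [HassB [HlB HrB]]; rewrite /pair_op.
by split; [|split] => [[a1 b1] [a2 b2] [a3 b3]|[a b]|[a b]] /=;
  rewrite ?HassA ?HassB ?HlA ?HlB ?HrA ?HrB.
Qed.

Lemma mstar_trans (S N : Type) (opN : N -> N -> N) (eN : N) (D : list (S * N * S))
  (HN : monoid_laws opN eN) p n q n' r :
  mstar opN eN D p n q -> mstar opN eN D q n' r -> mstar opN eN D p (opN n n') r.
Proof.
case: HN => Hass [Hl _].
elim=> [p0|p0 n0 q0 n1 r0 Hin _ IH] H; first by rewrite Hl.
by rewrite -Hass; apply: mstar_step Hin (IH H).
Qed.

Lemma A2_star_trans (Q : finType) (M : Type) (op : M -> M -> M) (e : M)
  (HM : monoid_laws op e) (Delta2 : list ((Q * Q) * (M * M) * (Q * Q)))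
  p q r m n m' n' :
  A2_star op e Delta2 p (m, n) q -> A2_star op e Delta2 q (m', n') r ->
  A2_star op e Delta2 p (op m m', op n n') r.
Proof. exact/mstar_trans/pair_op_monoid_laws. Qed.

Section SquaredAutomaton.

Variables (Sigma Q : finType) (M : Type) (op : M -> M -> M) (e : M).
Hypothesis HM : mge_monoid op e.
Variables (I F : {set Q}) (Delta : list (Q * (option Sigma * M) * Q)).
Variable Delta2 : list ((Q * Q) * (M * M) * (Q * Q)).

Lemma successful_relevant_pair i f mp :
  i.1 \in I -> i.2 \in I -> f.1 \in F -> f.2 \in F ->
  A2_star op e Delta2 i mp f -> relevant_pair op e I F Delta2 f mp.
Proof.
move=> Hi1 Hi2 Hf1 Hf2 Hif; split; last by exists i.
by split; [exists i, mp | exists f, (e, e); split=> //; apply: mstar_refl].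
Qed.

Definition A2_diagonal : Prop :=
  forall i f m m', i.1 \in I -> i.2 \in I -> f.1 \in F -> f.2 \in F ->
    A2_star op e Delta2 i (m, m') f -> m = m'.

Lemma functional_A2_diagonal :
  squared_output_automaton op e Delta Delta2 ->
  functional op e I F Delta <-> A2_diagonal.
Proof.
move=> HA2; split.
- move=> Hfun [i1 i2] [f1 f2] m m' /= Hi1 Hi2 Hf1 Hf2 /HA2 [u [H1 H2]].
  by apply: (Hfun u); [exists i1, f1 | exists i2, f2].
- move=> Hdiag u m m' [i [f [Hi Hf H]]] [i' [f' [Hi' Hf' H']]].
  by apply: (Hdiag (i, i') (f, f')) => //; apply/HA2; exists u.
Qed.

Section Valuation.

Variables (eta : M -> M -> M * M) (rho nu : Q * Q -> option (M * M)).
Hypothesis Heta : forall m m', equalizable op m m' -> is_mge op m m' (eta m m').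
Hypothesis Hval : valuation op e I F Delta2 eta rho nu.

Lemma rho_relevant p mp :
  relevant_pair op e I F Delta2 p mp ->
  exists n1 n2, rho p = Some (n1, n2) /\ relevant_pair op e I F Delta2 p (n1, n2).
Proof.
case: Hval => /(_ p) Hrho _ Hrel.
move: Hrho; case: (rho p) => [[n1 n2] Hn|Hnone]; first by exists n1, n2.
by case: Hnone; exists mp.
Qed.

Lemma nu_is_mge p n1 n2 :
  rho p = Some (n1, n2) -> equalizable op n1 n2 ->
  exists x, nu p = Some x /\ is_mge op n1 n2 x.
Proof.
case: Hval => _ [_ [Hnu_diag [Hnu_eta _]]].
have [<-|Hne] := classic (n1 = n2) => Hrho Heq.
  by exists (e, e); split; [exact: Hnu_diag Hrho | exact: is_mge_diag].
by exists (eta n1 n2); split; [exact: Hnu_eta Hrho Hne Heq | exact: Heta].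
Qed.

Lemma A2_diagonal_nu_mge :
  A2_diagonal -> forall p mp, relevant_pair op e I F Delta2 p mp ->
  exists x, nu p = Some x /\ is_mge op mp.1 mp.2 x.
Proof.
move=> Hdiag p [m1 m2] Hrel.
have [n1 [n2 [Hrho [_ [j [Hj1 Hj2 Hj]]]]]] := rho_relevant Hrel.
case: Hrel => [[_ [f [[a b] [Hf1 Hf2 Hpf]]]] [i [Hi1 Hi2 Hi]]].
have Hm : is_equalizer op m1 m2 (a, b).
  exact: Hdiag Hi1 Hi2 Hf1 Hf2 (A2_star_trans HM.1 Hi Hpf).
have Hn : is_equalizer op n1 n2 (a, b).
  exact: Hdiag Hj1 Hj2 Hf1 Hf2 (A2_star_trans HM.1 Hj Hpf).
have [x [Hx Hmge]] := nu_is_mge Hrho (ex_intro _ _ Hn).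
by exists x; split=> //; exact: (is_mge_transfer HM Hmge Hn Hm).
Qed.

Lemma A2_diagonal_nu_final :
  A2_diagonal -> forall f, f.1 \in F -> f.2 \in F -> A2_accessible op e I Delta2 f ->
  nu f = Some (e, e).
Proof.
move=> Hdiag f Hf1 Hf2 [i [mp [Hi1 Hi2 Hi]]].
have [m [m' [Hrho [_ [j [Hj1 Hj2 Hj]]]]]] :=
  rho_relevant (successful_relevant_pair Hi1 Hi2 Hf1 Hf2 Hi).
have Em : m = m' by exact: Hdiag Hj1 Hj2 Hf1 Hf2 Hj.
by case: Hval => _ [_ [Hnu_diag _]]; apply: (Hnu_diag f m); rewrite Hrho -Em.
Qed.

Lemma nu_conditions_A2_diagonal :
  (forall p mp, relevant_pair op e I F Delta2 p mp ->
     exists x, nu p = Some x /\ is_mge op mp.1 mp.2 x) ->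
  (forall f, f.1 \in F -> f.2 \in F -> A2_accessible op e I Delta2 f ->
     nu f = Some (e, e)) ->
  A2_diagonal.
Proof.
move=> Hmge Hfinal i f m m' Hi1 Hi2 Hf1 Hf2 Hif.
have [x [Hx [Heq _]]] := Hmge _ _ (successful_relevant_pair Hi1 Hi2 Hf1 Hf2 Hif).
move: Hx Heq; rewrite Hfinal //; last by exists i, (m, m').
case: HM => [[_ [_ Hr]] _] [<-].
by rewrite /is_equalizer /= !Hr.
Qed.

End Valuation.

End SquaredAutomaton.

Theorem lemma7 (Sigma Q : finType) (M : Type) (op : M -> M -> M) (e : M)
  (HM : mge_monoid op e)
  (eta : M -> M -> M * M)
  (Heta : forall m m', equalizable op m m' -> is_mge op m m' (eta m m'))
  (I F : {set Q}) (Delta : list (Q * (option Sigma * M) * Q))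
  (Htrim : trimmed op e I F Delta)
  (Delta2 : list ((Q * Q) * (M * M) * (Q * Q)))
  (HA2 : squared_output_automaton op e Delta Delta2)
  (rho nu : Q * Q -> option (M * M))
  (Hval : valuation op e I F Delta2 eta rho nu) :
  functional op e I F Delta <->
  ((forall (p : Q * Q) (mp : M * M), relevant_pair op e I F Delta2 p mp ->
      exists x, nu p = Some x /\ is_mge op mp.1 mp.2 x) /\
   (forall f : Q * Q, f.1 \in F -> f.2 \in F -> A2_accessible op e I Delta2 f ->
      nu f = Some (e, e))).
Proof.
rewrite (functional_A2_diagonal I F HA2); split=> [Hdiag|[Hmge Hfinal]].
- split; first exact: (A2_diagonal_nu_mge HM Heta Hval Hdiag).
  exact: (A2_diagonal_nu_final Hval Hdiag).
- exact: (nu_conditions_A2_diagonal HM Hmge Hfinal).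
Qed.
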